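(* Let $n\ge 2$ and integers $0<k_1<k_2<k_3\le n$ with $k_2<n$. Let $g_1:\{0,1\}^{k_2}\to\{0,1\}$ be a Boolean function depending on all of its input variables. Let $P_1$ be the $k_2$-party box on parties $1,\dots,k_2$ with $P_1(a_1\dots a_{k_2}\mid x_1\dots x_{k_2})=2^{-(k_2-1)}$ if $\bigoplus_{i=1}^{k_2}a_i=g_1(x_1,\dots,x_{k_2})$ and $0$ otherwise, and let $P_2$ be the box on parties $k_1,\dots,n$ with $P_2(b_{k_1}\dots b_n\mid x_{k_1}\dots x_n)=2^{-(n-k_1)}$ if $\bigoplus_{i=k_1}^n b_i=\prod_{i=k_1}^{k_3}x_i$ and $0$ otherwise. Using independent copies of $P_1$ and $P_2$ in parallel (each party $i$ feeding its input $x_i$ into every box it participates in), let party $i$ output $c_i=a_i$ for $1\le i\le k_1-1$, $c_i=a_i\oplus b_i$ for $k_1\le i\le k_2$, and $c_i=b_i$ for $k_2+1\le i\le n$. Then the resulting $n$-partite box has the same conditional distribution as the full-correlation box $$P(\vec c\mid\vec x)=\begin{cases}2^{-(n-1)} & \bigoplus_{i=1}^n c_i=g_1(x_1,\dots,x_{k_2})\oplus\prod_{i=k_1}^{k_3}x_i,\\ 0&\text{otherwise.}\end{cases}$$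
   Context: All inputs and outputs are bits; $\oplus$ denotes addition modulo 2. An $m$-party box is a conditional distribution of $m$ output bits given $m$ input bits. *)

From mathcomp Require Import all_boot all_order all_algebra.
Set Implicit Arguments. Unset Strict Implicit. Unset Printing Implicit Defensive.
Import Order.TTheory GRing.Theory Num.Theory.
Local Open Scope ring_scope.

(* Parties 1..n are represented
   0-based by ['I_n]: party p (1-based) is index p-1.  Output/input strings of
   an m-party box are elements of [{ffun 'I_m -> bool}]; a box is a function
   (outputs, inputs) -> probability. *)

(* the i-th bit (0-based) of an n-bit string, false when out of range *)
Definition bit_at (n : nat) (x : {ffun 'I_n -> bool}) (i : nat) : bool :=
  odflt false (omap x (insub i)).

Definition xorall (m : nat) (a : {ffun 'I_m -> bool}) : bool :=
  \big[addb/false]_(i < m) a i.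

Definition flip (m : nat) (x : {ffun 'I_m -> bool}) (i : 'I_m) : {ffun 'I_m -> bool} :=
  [ffun j => if j == i then ~~ x j else x j].

Definition depends_on_all (m : nat) (g : {ffun 'I_m -> bool} -> bool) : Prop :=
  forall i : 'I_m, exists x : {ffun 'I_m -> bool}, g x != g (flip x i).

Definition P1 (R : realFieldType) (k2 : nat) (g : {ffun 'I_k2 -> bool} -> bool)
  (a x : {ffun 'I_k2 -> bool}) : R :=
  if xorall a == g x then (2 ^+ (k2 - 1)%N)^-1 else 0.

(* P2 on parties k1..n (m := n - k1 + 1 parties, local index t <-> party k1+t);
   prob 2^-(n-k1) iff xor b = prod_{i=k1}^{k3} x_i, i.e. the AND of the first
   l := k3 - k1 + 1 local inputs. *)
Definition P2 (R : realFieldType) (m l : nat) (b y : {ffun 'I_m -> bool}) : R :=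
  if xorall b == \big[andb/true]_(t < m | (t < l)%N) y t then (2 ^+ (m - 1)%N)^-1 else 0.

Definition inputs1 (n k2 : nat) (x : {ffun 'I_n -> bool}) : {ffun 'I_k2 -> bool} :=
  [ffun j : 'I_k2 => bit_at x j].

(* inputs of P2: x_{k1}..x_n (0-based indices k1-1 .. n-1) *)
Definition inputs2 (n k1 : nat) (x : {ffun 'I_n -> bool}) : {ffun 'I_(n - k1).+1 -> bool} :=
  [ffun t : 'I_(n - k1).+1 => bit_at x (k1.-1 + t)].

(* output of the wiring: party p = i+1 outputs a_p if p < k1, a_p xor b_p if
   k1 <= p <= k2, b_p if p > k2; b_p sits at local index p - k1 = i - (k1-1). *)
Definition wire_out (n k1 k2 : nat) (a : {ffun 'I_k2 -> bool})
  (b : {ffun 'I_(n - k1).+1 -> bool}) : {ffun 'I_n -> bool} :=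
  [ffun i : 'I_n =>
     if (i.+1 < k1)%N then bit_at a i
     else if (i.+1 <= k2)%N then bit_at a i (+) bit_at b (i - k1.-1)%N
     else bit_at b (i - k1.-1)%N].

Definition wired_box (R : realFieldType) (n k1 k2 k3 : nat)
  (g : {ffun 'I_k2 -> bool} -> bool) (c x : {ffun 'I_n -> bool}) : R :=
  \sum_(a : {ffun 'I_k2 -> bool}) \sum_(b : {ffun 'I_(n - k1).+1 -> bool})
     @P1 R k2 g a (@inputs1 n k2 x) * @P2 R (n - k1).+1 (k3 - k1).+1 b (@inputs2 n k1 x)
       * (c == @wire_out n k1 k2 a b)%:R.

Definition full_box (R : realFieldType) (n k1 k2 k3 : nat)
  (g : {ffun 'I_k2 -> bool} -> bool) (c x : {ffun 'I_n -> bool}) : R :=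
  if xorall c == g (@inputs1 n k2 x) (+) \big[andb/true]_(i < n | (k1.-1 <= i < k3)%N) x i
  then (2 ^+ (n - 1)%N)^-1 else 0.

From mathcomp Require Import all_boot all_order all_algebra zify ring.
Set Implicit Arguments. Unset Strict Implicit. Unset Printing Implicit Defensive.
Import Order.TTheory GRing.Theory Num.Theory.

(* An output a of P1 can contribute to c only if it agrees with c on the
   parties 1..k1-1, which see P1 alone; then exactly one output of P2 yields
   c, namely b_i = c_i xor a_i, and its parity is xor c xor xor a.  So c has
   probability 2^-(k2-1) 2^-(n-k1) times the number of such a with
   xor a = g(x), and flipping a_{k2} shows that these are half of the
   2^(k2-k1+1) strings agreeing with c below k1. *)

Lemma bit_at_ord m (x : {ffun 'I_m -> bool}) (i : 'I_m) : bit_at x i = x i.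
Proof. by rewrite /bit_at valK. Qed.

Lemma bit_at_out m (x : {ffun 'I_m -> bool}) i : (m <= i) -> bit_at x i = false.
Proof. by move=> h; rewrite /bit_at insubN // -leqNgt. Qed.

Lemma bit_at_ffun m (F : nat -> bool) i :
  bit_at [ffun t : 'I_m => F t] i = (i < m) && F i.
Proof.
case: (ltnP i m) => h; last by rewrite bit_at_out.
by rewrite (bit_at_ord _ (Ordinal h)) ffunE.
Qed.

Lemma ffun_bitP m (x y : {ffun 'I_m -> bool}) :
  (forall i, (i < m) -> bit_at x i = bit_at y i) -> x = y.
Proof. by move=> h; apply/ffunP => i; rewrite -!bit_at_ord h. Qed.

Lemma xorall_nat m (x : {ffun 'I_m -> bool}) N : (m <= N) ->
  xorall x = \big[addb/false]_(0 <= i < N) bit_at x i.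
Proof.
move=> hN; rewrite (@big_cat_nat _ _ _ m 0 N) //= [X in _ (+) X]big1_seq.
  by rewrite addbF big_mkord; apply: eq_bigr => i _; rewrite bit_at_ord.
by move=> i /andP[_]; rewrite mem_index_iota => /andP[h _]; rewrite bit_at_out.
Qed.

Lemma xorall_split m (x : {ffun 'I_m -> bool}) p q : (m <= p + q) ->
  xorall x = \big[addb/false]_(0 <= i < p) bit_at x i
             (+) \big[addb/false]_(0 <= t < q) bit_at x (p + t).
Proof.
move=> hm; rewrite (xorall_nat x hm) (@big_cat_nat _ _ _ p) ?leq_addr //=.
by rewrite -{2}[p]add0n big_addn addKn; congr (_ (+) _); apply: eq_bigr => t _; rewrite addnC.
Qed.

Lemma flipK m (i : 'I_m) : involutive (fun x : {ffun 'I_m -> bool} => flip x i).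
Proof. by move=> x; apply/ffunP => j; rewrite !ffunE; case: eqP => // _; rewrite negbK. Qed.

Lemma xorall_flip m (x : {ffun 'I_m -> bool}) i : xorall (flip x i) = ~~ xorall x.
Proof.
rewrite /xorall (bigD1 i) //= [in RHS](bigD1 i) //= ffunE eqxx -addNb.
by congr (_ (+) _); apply: eq_bigr => j hj; rewrite ffunE (negbTE hj).
Qed.

(* Flipping one coordinate exchanges the two parity classes. *)
Lemma card_xorall_eq m (S : {set {ffun 'I_m -> bool}}) (i : 'I_m) G :
  (forall x, (flip x i \in S) = (x \in S)) ->
  (#|[set x in S | xorall x == G]| * 2 = #|S|).
Proof.
move=> flipS.
have flip_parity : (fun x => flip x i) @: [set x in S | xorall x == G]
                   = [set x in S | xorall x == ~~ G].
  apply/setP => x; rewrite (can_imset_pre _ (@flipK _ i)) !inE flipS xorall_flip.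
  by case: (xorall x); case: (G).
have card_parity : #|[set x in S | xorall x == ~~ G]| = #|[set x in S | xorall x == G]|.
  by rewrite -flip_parity card_imset //; apply: inv_inj; apply: flipK.
rewrite -(cardsID [set x | xorall x == G] S) muln2 -addnn; congr (_ + _).
  by apply: eq_card => x; rewrite !inE.
rewrite -card_parity; apply: eq_card => x; rewrite !inE andbC.
by case: (xorall x); case: (G).
Qed.

Definition prefix_eq m p (u : nat -> bool) (x : {ffun 'I_m -> bool}) : bool :=
  [forall i : 'I_m, (i < p) ==> (x i == u i)].

Lemma prefix_eqP m p u (x : {ffun 'I_m -> bool}) : (p <= m) ->
  reflect (forall i, (i < p) -> bit_at x i = u i) (prefix_eq p u x).
Proof.
move=> hp; apply: (iffP forallP) => [h i hi | h i].
  have him : (i < m) by lia.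
  by move: (h (Ordinal him)); rewrite -bit_at_ord /= hi => /eqP.
by apply/implyP => hi; rewrite -bit_at_ord h.
Qed.

Lemma card_prefix_eq m p u : (p <= m) ->
  #|[set x : {ffun 'I_m -> bool} | prefix_eq p u x]| = (2 ^ (m - p)).
Proof.
move=> hp; pose F (i : 'I_m) := if (i < p) then pred1 (u i) else predT.
have -> : #|[set x : {ffun 'I_m -> bool} | prefix_eq p u x]|
          = #|(family F : simpl_pred {ffun 'I_m -> bool})|.
  apply: eq_card => x; rewrite inE unfold_in /=; apply: eq_forallb => i.
  by rewrite /F; case: (i < p).
rewrite card_family foldrE big_image /=.
rewrite (eq_bigr (fun i : 'I_m => if (i < p) then 1 else 2)); last first.
  by move=> i _; rewrite /F; case: (i < p); rewrite ?card1 //= cardT enumT unlock.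
rewrite -(big_mkord xpredT (fun i => if (i < p) then 1 else 2)).
rewrite (@big_cat_nat _ _ _ p 0 m) //= big1_seq ?mul1n; last first.
  by move=> i /andP[_]; rewrite mem_index_iota => /andP[_ ->].
rewrite (eq_big_nat _ _ (F2 := fun _ => 2)) ?prod_nat_const_nat //.
by move=> i /andP[hi _]; rewrite ltnNge hi.
Qed.

Lemma card_prefix_eq_xorall m p u G : (p < m) ->
  #|[set x : {ffun 'I_m -> bool} | prefix_eq p u x && (xorall x == G)]|
    = (2 ^ (m - p.+1)).
Proof.
move=> hp; have hlast : (m.-1 < m) by lia.
have flip_prefix x : (flip x (Ordinal hlast) \in [set x | prefix_eq p u x])
                     = (x \in [set x | prefix_eq p u x]).
  rewrite !inE; apply: eq_forallb => i; rewrite ffunE.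
  have [-> | //] := eqVneq i (Ordinal hlast).
  by have -> : (m.-1 < p) = false by lia.
have := card_xorall_eq G flip_prefix; rewrite card_prefix_eq; last exact: ltnW.
have -> : (m - p = (m - p.+1).+1) by lia.
rewrite expnS mulnC => /eqP; rewrite eqn_pmul2l // => /eqP <-.
by apply: eq_card => x; rewrite !inE.
Qed.

Lemma andall_inputs2 n k1 k3 (x : {ffun 'I_n -> bool}) : 0 < k1 <= k3 -> k3 <= n ->
  \big[andb/true]_(t < (n - k1).+1 | (t < (k3 - k1).+1)) @inputs2 n k1 x t =
  \big[andb/true]_(i < n | (k1.-1 <= i < k3)) x i.
Proof.
move=> /andP[k1_gt0 k13] k3n; rewrite big_mkcond [RHS]big_mkcond.
under eq_bigr => t _ do rewrite ffunE.
under [RHS]eq_bigr => i _ do rewrite -bit_at_ord.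
rewrite -(big_mkord xpredT (fun t => if t < (k3 - k1).+1 then bit_at x (k1.-1 + t) else true)).
rewrite -(big_mkord xpredT (fun i => if k1.-1 <= i < k3 then bit_at x i else true)).
rewrite (@big_cat_nat _ _ _ k1.-1 0 n) //=; last by lia.
rewrite [X in _ = X && _]big1_seq ?andTb; last first.
  move=> i /andP[_]; rewrite mem_index_iota => /andP[_ hi].
  by have -> : (k1.-1 <= i < k3) = false by lia.
rewrite -{2}[k1.-1]add0n big_addn.
have -> : (n - k1.-1 = (n - k1).+1) by lia.
apply: eq_big_nat => t _.
have -> : (k1.-1 <= t + k1.-1 < k3) = (t < (k3 - k1).+1) by lia.
by rewrite addnC.
Qed.

Section Wiring.
Variables (n k1 k2 : nat).
Hypotheses (k1_gt0 : (0 < k1)) (k12 : (k1 < k2)) (k2n : (k2 < n)).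

Definition forced_out2 (c : {ffun 'I_n -> bool}) (a : {ffun 'I_k2 -> bool}) :
  {ffun 'I_(n - k1).+1 -> bool} :=
  [ffun t : 'I_(n - k1).+1 => bit_at c (k1.-1 + t) (+) bit_at a (k1.-1 + t)].

Lemma bit_at_forced_out2 c a t : bit_at (forced_out2 c a) t =
  (t < (n - k1).+1) && (bit_at c (k1.-1 + t) (+) bit_at a (k1.-1 + t)).
Proof. exact: (@bit_at_ffun _ (fun t => bit_at c (k1.-1 + t) (+) bit_at a (k1.-1 + t))). Qed.

Lemma bit_at_wire_out a b i : bit_at (@wire_out n k1 k2 a b) i =
  if (i < k1.-1) then bit_at a i else bit_at a i (+) bit_at b (i - k1.-1).
Proof.
case: (ltnP i n) => hi.
  rewrite (bit_at_ord _ (Ordinal hi)) ffunE /=.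
  have -> : (i.+1 < k1) = (i < k1.-1) by lia.
  case: ifP => // _; case: ifP => // beyond_k2.
  by rewrite (@bit_at_out k2 a i) //; lia.
rewrite !bit_at_out //; try lia.
by have -> : (i < k1.-1) = false by lia.
Qed.

Lemma wire_outE c a b :
  (c == @wire_out n k1 k2 a b) = prefix_eq k1.-1 (bit_at c) a && (b == forced_out2 c a).
Proof.
have k1k2 : (k1.-1 <= k2) by lia.
apply/idP/idP.
  move/eqP => ->; apply/andP; split.
    by apply/prefix_eqP => // i hi; rewrite bit_at_wire_out hi.
  apply/eqP/ffunP => t; rewrite ffunE bit_at_wire_out.
  have -> : (k1.-1 + t < k1.-1) = false by lia.
  by rewrite addKn bit_at_ord; case: (bit_at a _); case: (b t).
case/andP => /prefix_eqP-/(_ k1k2) prefix_a /eqP ->.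
apply/eqP/ffun_bitP => i hi; rewrite bit_at_wire_out.
case: ifP => hk; first by rewrite prefix_a.
rewrite bit_at_forced_out2; have -> : (i - k1.-1 < (n - k1).+1) by lia.
have -> : k1.-1 + (i - k1.-1) = i by lia.
by case: (bit_at a i); case: (bit_at c i).
Qed.

Lemma xorall_forced_out2 c a : prefix_eq k1.-1 (bit_at c) a ->
  xorall (forced_out2 c a) = xorall c (+) xorall a.
Proof.
have k1k2 : k1.-1 <= k2 by lia.
have split_n : n <= k1.-1 + (n - k1).+1 by lia.
have split_k2 : k2 <= k1.-1 + (n - k1).+1 by lia.
move/prefix_eqP => /(_ k1k2) prefix_a.
rewrite (xorall_nat _ (leqnn (n - k1).+1)) (xorall_split c split_n) (xorall_split a split_k2).
have -> : \big[addb/false]_(0 <= i < k1.-1) bit_at a i =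
          \big[addb/false]_(0 <= i < k1.-1) bit_at c i.
  by apply: eq_big_nat => i /andP[_ hi]; rewrite prefix_a.
rewrite addbACA addbb addFb -big_split /=.
by apply: eq_big_nat => t /andP[_ ht]; rewrite bit_at_forced_out2 ht.
Qed.

End Wiring.

Local Open Scope ring_scope.

Lemma sum_nat_bool (R : pzSemiRingType) (T : finType) (P : pred T) :
  \sum_(x : T) ((P x)%:R : R) = (#|[set x | P x]|)%:R.
Proof.
rewrite -sum1_card natr_sum [RHS]big_mkcond /=; apply: eq_bigr => x _.
by rewrite inE; case: (P x).
Qed.

Section WiredBox.
Variables (R : realFieldType) (n k1 k2 k3 : nat).
Hypotheses (k1_gt0 : (0 < k1)%N) (k12 : (k1 < k2)%N) (k23 : (k2 < k3)%N).
Hypotheses (k3n : (k3 <= n)%N) (k2n : (k2 < n)%N).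
Variables (g : {ffun 'I_k2 -> bool} -> bool) (c x : {ffun 'I_n -> bool}).

Let G := g (inputs1 k2 x).
Let A := \big[andb/true]_(i < n | (k1.-1 <= i < k3)%N) x i.

Lemma sum_wired_out2 a :
  \sum_(b : {ffun 'I_(n - k1).+1 -> bool})
     @P1 R k2 g a (inputs1 k2 x) * @P2 R (n - k1).+1 (k3 - k1).+1 b (inputs2 k1 x)
       * (c == @wire_out n k1 k2 a b)%:R
  = (prefix_eq k1.-1 (bit_at c) a && (xorall a == G))%:R
    * (if xorall c == G (+) A then (2 ^+ (k2 - 1))^-1 * (2 ^+ (n - k1))^-1 else 0 : R).
Proof.
under eq_bigr => b _ do rewrite wire_outE //.
rewrite (bigD1 (forced_out2 k1 c a)) //= big1 ?addr0 => [|b hb]; last first.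
  by rewrite (negbTE hb) andbF mulr0.
rewrite eqxx andbT; case prefix_a: (prefix_eq _ _ a); last by rewrite !mulr0 mul0r.
rewrite /P1 /P2 xorall_forced_out2 // andall_inputs2 //; last by lia.
rewrite -/A -/G subSS subn0; case: eqP => [-> | _] /=; last by rewrite !mul0r.
have -> : (xorall c (+) G == A) = (xorall c == G (+) A).
  by case: (xorall c); case: G; case: A.
by case: ifP => _; rewrite ?mulr0 ?mul0r ?mulr1 ?mul1r.
Qed.

End WiredBox.

Theorem lemma2 (R : realFieldType) (n k1 k2 k3 : nat)
  (hn : (2 <= n)%N) (h1 : (0 < k1)%N) (h12 : (k1 < k2)%N) (h23 : (k2 < k3)%N)
  (h3n : (k3 <= n)%N) (h2n : (k2 < n)%N)
  (g : {ffun 'I_k2 -> bool} -> bool) (hg : depends_on_all g) :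
  forall c x : {ffun 'I_n -> bool},
    @wired_box R n k1 k2 k3 g c x = @full_box R n k1 k2 k3 g c x.
Proof.
move=> c x; rewrite /wired_box.
rewrite (eq_bigr _ (fun a _ => sum_wired_out2 R h1 h12 h23 h3n h2n g c x a)).
rewrite -big_distrl /= sum_nat_bool card_prefix_eq_xorall; last by lia.
rewrite /full_box; case: ifP => _; last by rewrite mulr0.
have -> : (k2 - k1.-1.+1 = k2 - k1)%N by lia.
have -> : (k2 - 1 = (k2 - k1) + (k1 - 1))%N by lia.
have -> : (n - 1 = (n - k1) + (k1 - 1))%N by lia.
have two_neq0 : (2 : R) != 0 by rewrite pnatr_eq0.
by rewrite !exprD natrX; field; rewrite ?mulf_neq0 ?expf_neq0.
Qed.
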